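(* For every integer $d\geq 1$, $c_{d((2),(2)),\,d((2),(2))}^{d((2),(2))}=1$, i.e. the multiplicity of $M_{((2d),(2d))}$ in $M_{((2d),(2d))}\otimes M_{((2d),(2d))}$ equals $1$.
   Context: A double partition of $n$ is an ordered pair $(\alpha^+,\alpha^-)$ of partitions with $|\alpha^+|+|\alpha^-|=n$. Let $W_n=(\mathbb{Z}/2\mathbb{Z})^n\rtimes\mathfrak{S}_n$ be the hyperoctahedral group. For complex vector spaces $V^+,V^-$ and $V=V^+\oplus V^-$, $W_n$ acts on $V^{\otimes n}$ ($\mathfrak{S}_n$ permuting tensor factors, the $i$-th generator of $(\mathbb{Z}/2\mathbb{Z})^n$ acting by $\mathrm{id}_{V^+}\oplus(-\mathrm{id}_{V^-})$ on the $i$-th factor), commuting with $\mathrm{GL}(V^+)\times\mathrm{GL}(V^-)$, and $V^{\otimes n}\simeq\bigoplus_{(\alpha^+,\alpha^-)}\mathbb{S}^{\alpha^+}(V^+)\otimes\mathbb{S}^{\alpha^-}(V^-)\otimes M_{\alpha^\pm}$ over double partitions of $n$ with $\ell(\alpha^\pm)\leq\dim V^\pm$; this defines the irreducible $W_n$-representation $M_{\alpha^\pm}$. $c_{\alpha^\pm,\beta^\pm}^{\gamma^\pm}$ is the multiplicity of $M_{\gamma^\pm}$ in $M_{\alpha^\pm}\otimes M_{\beta^\pm}$. $d((2),(2))=((2d),(2d))$. *)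

From HB Require Import structures.
From mathcomp Require Import all_boot all_order all_algebra all_fingroup all_field.
Set Implicit Arguments. Unset Strict Implicit. Unset Printing Implicit Defensive.
Import GRing.Theory Num.Theory.
Local Open Scope ring_scope.

(* Hyperoctahedral group W_n realised as the group of signed permutations:
   permutations of 'I_n * bool commuting with the sign flip (i,b) |-> (i,~~b). *)
Definition flipf n (x : 'I_n * bool) : 'I_n * bool := (x.1, ~~ x.2).
Lemma flipfK n : involutive (@flipf n).
Proof. by case=> i b; rewrite /flipf /= negbK. Qed.
Definition flipn n : {perm 'I_n * bool} := perm (inv_inj (@flipfK n)).

Definition hyperoct n : {group {perm 'I_n * bool}} := ('C[flipn n])%G.

Definition sperm n (w : {perm 'I_n * bool}) (i : 'I_n) : 'I_n := (w (i, false)).1.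
Definition sflip n (w : {perm 'I_n * bool}) (i : 'I_n) : bool := (w (i, false)).2.

(* Matrix of w acting (on the right) on V^{(x)n} with V^+ = C e, V^- = C f
   (dim V^+ = dim V^- = 1), restricted to the weight (n-m, m) subspace, i.e.
   the span of tensors with f in the positions S, #|S| = m.  By the defining
   decomposition, this subspace is exactly M_{((n-m),(m))}. *)
Definition Mrep n m (w : {perm 'I_n * bool}) (S T : {set 'I_n}) : algC :=
  if [&& #|S| == m, #|T| == m & T == sperm w @: S]
  then \prod_(i in S) (-1) ^+ sflip w i else 0.

Definition Mchar n m (w : {perm 'I_n * bool}) : algC :=
  \sum_(S : {set 'I_n} | #|S| == m) Mrep m w S S.

Definition tensor_mult (gT : finGroupType) (G : {group gT})
  (chiA chiB chiC : gT -> algC) : algC :=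
  #|G|%:R^-1 * \sum_(w in G) chiA w * chiB w * (chiC w)^*.

From mathcomp Require Import all_boot all_order all_algebra all_fingroup all_field.
From mathcomp Require Import zify.
Set Implicit Arguments. Unset Strict Implicit. Unset Printing Implicit Defensive.
Import GRing.Theory Num.Theory.

(* Write w in W_n as a signed permutation (f, s).  The character of
   M_((n-m),(m)) at w is the sum, over the m-subsets S stable under s, of the
   sign (-1)^(sum of f over S); it is real, so the multiplicity is
   |W_n|^-1 * sum_w chi(w)^3.  Expanding the cube and summing over the signs f
   first kills every triple (A, B, C) of m-subsets except those covering each
   point an even number of times, and leaves 2^n times the number of such
   triples fixed by s.  By the Cauchy-Frobenius lemma the multiplicity is thus
   the number of S_n-orbits of even triples.  An even triple is (A, B, A xor B),
   determined by the labelling x |-> (x in A, x in B), whose four fibres have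
   sizes forced by n and m; labellings with the same fibre sizes are conjugate
   under S_n, so there is exactly one orbit whenever an even triple exists, as
   it does for n = 4d, m = 2d (take all four fibres of size d). *)

Section Fibres.
Variable T : finType.

Lemma card_fibres_perm (U : eqType) (g h : T -> U) :
  (forall u, #|[set x | g x == u]| = #|[set x | h x == u]|) ->
  exists s : {perm T}, forall x, g (s x) = h x.
Proof.
move=> eq_fibres.
pose fg u := enum [set y | g y == u]; pose fh u := enum [set y | h y == u].
have fh_hx x : x \in fh (h x) by rewrite mem_enum inE.
have index_lt x : index x (fh (h x)) < size (fg (h x)).
  by rewrite -cardE eq_fibres cardE index_mem.
(* sf maps the k-th element of each h-fibre to the k-th element of the g-fibre. *)
pose sf x := nth x (fg (h x)) (index x (fh (h x))).
have g_sf x : g (sf x) = h x.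
  by have := mem_nth x (index_lt x); rewrite mem_enum inE => /eqP.
have sf_inj : injective sf.
  move=> x y eq_sf; have eq_h : h x = h y by rewrite -!g_sf eq_sf.
  have lt_y : index y (fh (h x)) < size (fg (h x)) by rewrite eq_h index_lt.
  move: eq_sf; rewrite /sf -eq_h (set_nth_default x y lt_y).
  move/eqP; rewrite nth_uniq ?enum_uniq ?index_lt //.
  by move/eqP/(congr1 (nth x (fh (h x)))); rewrite !nth_index // eq_h.
by exists (perm sf_inj) => x; rewrite permE.
Qed.

Lemma card_preim_sum (U : finType) (g : T -> U) (P : pred U) :
  #|[set x | P (g x)]| = \sum_(u | P u) #|[set x | g x == u]|.
Proof.
rewrite -sum1_card (partition_big g P) => [|x]; last by rewrite inE.
apply: eq_bigr => u Pu; rewrite -sum1_card; apply: eq_bigl => x.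
by rewrite !inE andb_idl // => /eqP ->.
Qed.

Lemma uniform_labelling_exists (U : finType) d : #|T| = (#|U| * d)%N ->
  exists g : T -> U, forall u, #|[set x | g x == u]| = d.
Proof.
move=> cardT; have card_UI : #|{: U * 'I_d}| = #|T| by rewrite card_prod card_ord.
pose e x : U * 'I_d := enum_val (cast_ord (esym card_UI) (enum_rank x)).
have e_inj : injective e by move=> x y /enum_val_inj/cast_ord_inj/enum_rank_inj.
have e_bij : bijective e by apply: inj_card_bij; rewrite // card_UI.
exists (fun x => (e x).1) => u.
have -> : [set x | (e x).1 == u] = e @^-1: [set p | p.1 == u].
  by apply/setP=> x; rewrite !inE.
rewrite on_card_preimset; last exact: onW_bij.
transitivity #|setX [set u] [set: 'I_d]|; last by rewrite cardsX cards1 cardsT card_ord mul1n.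
by apply: eq_card => -[v i]; rewrite !inE andbT.
Qed.
Lemma card_preim_bool2 (g : T -> bool * bool) (P : pred (bool * bool)) :
  #|[set x | P (g x)]| =
  \sum_(a : bool) \sum_(b : bool) if P (a, b) then #|[set x | g x == (a, b)]| else 0%N.
Proof.
by rewrite card_preim_sum big_mkcond pair_bigA; apply: eq_bigr => -[a b].
Qed.
End Fibres.

Lemma card_orbits_transitive (aT : finGroupType) (rT : finType)
    (to : {action aT &-> rT}) (G : {group aT}) (S : {set rT}) :
  [transitive G, on S | to] -> #|orbit to G @: S| = 1%N.
Proof.
move=> trans_S; have /imsetP[x Sx _] := trans_S.
suff -> : orbit to G @: S = [set S] by rewrite cards1.
apply/setP => X; rewrite inE; apply/imsetP/eqP => [[y Sy ->] | ->].
  exact: atransP trans_S y Sy.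
by exists x; rewrite ?(atransP trans_S x Sx).
Qed.

Section Triples.
Variable T : finType.

Definition triple := ({set T} * {set T} * {set T})%type.

Definition triple_act_fun (t : triple) (s : {perm T}) : triple :=
  (s @: t.1.1, s @: t.1.2, s @: t.2).

Lemma triple_act1 : triple_act_fun^~ 1%g =1 id.
Proof. by case=> [[A B] C]; rewrite /triple_act_fun /= !imset_perm1. Qed.

Lemma triple_actM t : act_morph triple_act_fun t.
Proof.
have imsetM (s1 s2 : {perm T}) (A : {set T}) : (s1 * s2)%g @: A = s2 @: (s1 @: A).
  by rewrite -imset_comp; apply: eq_imset => x; rewrite permM.
by move=> s1 s2; rewrite /triple_act_fun /= !imsetM.
Qed.

Definition triple_act := TotalAction triple_act1 triple_actM.

Definition cover_count (t : triple) x : nat :=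
  (x \in t.1.1) + (x \in t.1.2) + (x \in t.2).

Definition even_cover (t : triple) := [forall x, ~~ odd (cover_count t x)].

Definition even_triples (m : nat) : {set triple} :=
  [set t : triple | [&& #|t.1.1| == m, #|t.1.2| == m, #|t.2| == m & even_cover t]].

Definition triple_label (t : triple) x : bool * bool := (x \in t.1.1, x \in t.1.2).

Definition triple_of (g : T -> bool * bool) : triple :=
  ([set x | (g x).1], [set x | (g x).2], [set x | (g x).1 != (g x).2]).

Lemma triple_of_label t : even_cover t -> triple_of (triple_label t) = t.
Proof.
case: t => [[A B] C] /forallP even_t; congr (_, _, _); apply/setP => x; rewrite inE //=.
by move: (even_t x); rewrite /cover_count /=; case: (x \in A); case: (x \in B); case: (x \in C).
Qed.

Lemma even_cover_triple_of g : even_cover (triple_of g).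
Proof. by apply/forallP => x; rewrite /cover_count !inE; case: (g x) => [[] []]. Qed.

Lemma triple_act_of (g h : T -> bool * bool) (s : {perm T}) :
  (forall x, h (s x) = g x) -> triple_act (triple_of g) s = triple_of h.
Proof.
move=> hs; have imset_s P : s @: [set x | P (g x)] = [set x | P (h x)].
  by apply/setP => y; rewrite -[y](permKV s) mem_imset ?inE ?hs //; apply: perm_inj.
by rewrite /= /triple_act_fun /= (imset_s fst) (imset_s snd) (imset_s (fun u => u.1 != u.2)).
Qed.

Lemma triple_fixE t (s : {perm T}) :
  (triple_act t s == t) =
  [&& s @: t.1.1 == t.1.1, s @: t.1.2 == t.1.2 & s @: t.2 == t.2].
Proof. by case: t => [[A B] C]; rewrite !xpair_eqE andbA. Qed.

Lemma cover_count_act t (s : {perm T}) x :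
  cover_count (triple_act t s) (s x) = cover_count t x.
Proof. by rewrite /cover_count /= !mem_imset //; apply: perm_inj. Qed.

Lemma even_triples_act m t (s : {perm T}) :
  (triple_act t s \in even_triples m) = (t \in even_triples m).
Proof.
rewrite !inE /= !card_imset; try exact: perm_inj.
congr [&& _, _, _ & _]; apply/forallP/forallP => even_t x; last first.
  by rewrite -[x](permKV s) cover_count_act.
by rewrite -(cover_count_act t s).
Qed.

Lemma even_triples_acts m : [acts setT, on even_triples m | triple_act].
Proof. by apply/actsP => s _ t; apply: even_triples_act. Qed.

Lemma card_even_triple_fibre m t u : t \in even_triples m ->
  #|[set x | triple_label t x == u]| =
    if u == (false, false) then (#|T| - 3 * (m %/ 2))%N else (m %/ 2)%N.
Proof.
rewrite inE => /and4P[/eqP cardA /eqP cardB /eqP cardC /triple_of_label t_of].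
pose c u := #|[set x | triple_label t x == u]|; rewrite -/(c u).
have card_label P : #|[set x | P (triple_label t x)]| =
    \sum_(a : bool) \sum_(b : bool) if P (a, b) then c (a, b) else 0%N.
  exact: card_preim_bool2.
have {}cardC : #|[set x | (x \in t.1.1) != (x \in t.1.2)]| = m.
  by rewrite -cardC -[in RHS]t_of.
have := card_label fst; have := card_label snd.
have := card_label (fun u => u.1 != u.2); have := card_label predT.
rewrite !big_bool /= cardC cardsT !cardsE cardA cardB; clearbody c => cardT *.
have [cTT cTF cFT cFF] : [/\ c (true, true) = m %/ 2, c (true, false) = m %/ 2,
    c (false, true) = m %/ 2 & c (false, false) = #|T| - 3 * (m %/ 2)]%N.
  by split; [lia.. | rewrite cardT; lia].
by case: u => [[] []]; rewrite ?cTT ?cTF ?cFT ?cFF.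
Qed.

Lemma even_triples_transitive m t0 : t0 \in even_triples m ->
  [transitive setT, on even_triples m | triple_act].
Proof.
move=> even_t0; apply/imsetP; exists t0 => //; apply/eqP.
rewrite eqEsubset acts_sub_orbit ?even_triples_acts // even_t0 andbT.
apply/subsetP => t even_t.
have [s label_s] : exists s : {perm T}, forall x, triple_label t (s x) = triple_label t0 x.
  apply: card_fibres_perm => u.
  by rewrite !(card_even_triple_fibre u even_t, card_even_triple_fibre u even_t0).
move: even_t0 even_t; rewrite !inE.
move=> /and4P[_ _ _ /triple_of_label <-] /and4P[_ _ _ /triple_of_label <-].
by apply/orbitP; exists s; rewrite ?inE ?(triple_act_of label_s).
Qed.

Lemma even_triples_nonempty d :
  #|T| = (4 * d)%N -> exists t, t \in even_triples (2 * d).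
Proof.
have card_bool2 : #|{: bool * bool}| = 4 by rewrite card_prod card_bool.
rewrite -card_bool2 => /uniform_labelling_exists [g card_g]; exists (triple_of g).
rewrite inE even_cover_triple_of /= (card_preim_bool2 g (fun u => u.1 != u.2)).
by rewrite !card_preim_bool2 !big_bool /= !card_g !addn0 add0n addnn -mul2n eqxx.
Qed.
End Triples.

Local Open Scope ring_scope.

Lemma sum_cube (R : pzSemiRingType) (I : finType) (P : pred I) (F : I -> R) :
  (\sum_(i | P i) F i) * (\sum_(i | P i) F i) * (\sum_(i | P i) F i) =
  \sum_(t : I * I * I | P t.1.1 && P t.1.2 && P t.2) F t.1.1 * F t.1.2 * F t.2.
Proof.
have sum_sq : (\sum_(i | P i) F i) * (\sum_(i | P i) F i) =
    \sum_(ij : I * I | P ij.1 && P ij.2) F ij.1 * F ij.2.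
  rewrite -(pair_big P P (fun i j => F i * F j)) mulr_suml.
  by apply: eq_bigr => i _; rewrite mulr_sumr.
rewrite sum_sq.
rewrite -(pair_big (fun ij : I * I => P ij.1 && P ij.2) P (fun ij k => F ij.1 * F ij.2 * F k)).
by rewrite mulr_suml; apply: eq_bigr => ij _; rewrite mulr_sumr.
Qed.

Lemma sum_ffun_sign (T : finType) (k : T -> nat) :
  \sum_(f : {ffun T -> bool}) \prod_i ((-1) ^+ (f i * k i) : algC) =
  if [forall i, ~~ odd (k i)] then 2 ^+ #|T| else 0.
Proof.
rewrite -(bigA_distr_bigA (fun i (b : bool) => (-1) ^+ (b * k i) : algC)) /=.
under eq_bigr => i _ do rewrite big_bool /= mul1n mul0n expr0 -signr_odd.
case: ifP => [/forallP even_k | /negbT/forallPn[i odd_ki]].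
  by rewrite (eq_bigr (fun _ => 2)) ?prodr_const // => i _; rewrite (negbTE (even_k i)).
by rewrite (bigD1 i) //= (negbNE odd_ki) addNr mul0r.
Qed.

Section SignedPermutations.
Variable n : nat.

Definition signed_perm_fun (p : {ffun 'I_n -> bool} * {perm 'I_n}) (x : 'I_n * bool) :=
  (p.2 x.1, x.2 (+) p.1 x.1).

Lemma signed_perm_fun_inj p : injective (signed_perm_fun p).
Proof. by move=> [i b] [j c] [/perm_inj <-]; case: b; case: c; case: (p.1 i). Qed.

Definition signed_perm (p : {ffun 'I_n -> bool} * {perm 'I_n}) : {perm 'I_n * bool} :=
  perm (@signed_perm_fun_inj p).

Lemma signed_perm_inj : injective signed_perm.
Proof.
move=> [f s] [f' s'] eq_w; have eq_w_at i := congr1 (fun w : {perm _} => w (i, false)) eq_w.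
by congr (_, _); [apply/ffunP | apply/permP] => i; move: (eq_w_at i); rewrite !permE => -[].
Qed.

Lemma signed_perm_hyperoct p : signed_perm p \in hyperoct n.
Proof.
by apply/cent1P; apply/permP => -[i b]; rewrite !permM !permE /= /flipf /signed_perm_fun /= addNb.
Qed.

Lemma hyperoct_flip w x : w \in hyperoct n -> w (flipf x) = flipf (w x).
Proof. by move/cent1P/(congr1 (fun w : {perm _} => w x)); rewrite !permM !permE. Qed.

Lemma sperm_inj w : w \in hyperoct n -> injective (sperm w).
Proof.
move=> w_in i j; rewrite /sperm => eq_ij.
have : w (i, false) \in [:: w (j, false); w (j, true)].
  rewrite -[(j, true)]/(flipf (j, false)) hyperoct_flip // !inE /flipf.
  move: eq_ij; case: (w (i, false)) => a b; case: (w (j, false)) => a' b' /= ->.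
  by rewrite !xpair_eqE eqxx; case: b; case: b'.
by rewrite !inE !(inj_eq perm_inj) => /orP[/eqP[] | /eqP[]].
Qed.

Lemma hyperoctE : hyperoct n = signed_perm @: setT :> {set _}.
Proof.
apply/setP => w; apply/idP/imsetP => [w_in | [p _ ->]]; last exact: signed_perm_hyperoct.
exists ([ffun i => sflip w i], perm (sperm_inj w_in)) => //.
apply/permP => -[i b]; rewrite permE /signed_perm_fun /= ffunE permE /sperm /sflip.
case: b => /=; last by case: (w (i, false)).
by rewrite -[(i, true)]/(flipf (i, false)) hyperoct_flip // /flipf; case: (w (i, false)).
Qed.

Lemma card_hyperoct : #|hyperoct n| = (2 ^ n * n`!)%N.
Proof.
rewrite hyperoctE card_imset; last exact: signed_perm_inj.
by rewrite cardsT card_prod card_ffun card_bool card_ord card_Sn.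
Qed.

End SignedPermutations.

Definition sign_on (T : finType) (f : {ffun T -> bool}) (S : {set T}) : algC :=
  \prod_(i in S) (-1) ^+ f i.

Lemma sign_onE (T : finType) f (S : {set T}) :
  sign_on f S = \prod_i (-1) ^+ (f i * (i \in S)).
Proof.
rewrite /sign_on big_mkcond; apply: eq_bigr => i _.
by case: (i \in S); rewrite ?muln1 ?muln0.
Qed.

Lemma sum_sign_on_triple (T : finType) (t : triple T) :
  \sum_(f : {ffun T -> bool}) sign_on f t.1.1 * sign_on f t.1.2 * sign_on f t.2 =
  if even_cover t then 2 ^+ #|T| else 0.
Proof.
rewrite -sum_ffun_sign; apply: eq_bigr => f _.
by rewrite !sign_onE -!big_split; apply: eq_bigr => i _; rewrite /= -!exprD -!mulnDr.
Qed.

Lemma Mchar_signed_perm n m f (s : {perm 'I_n}) :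
  Mchar m (signed_perm (f, s)) =
  \sum_(S : {set 'I_n} | (#|S| == m) && (s @: S == S)) sign_on f S.
Proof.
rewrite big_mkcondr; apply: eq_bigr => S /eqP card_S.
rewrite /Mrep card_S eqxx /sign_on.
have -> : sperm (signed_perm (f, s)) @: S = s @: S.
  by apply: eq_imset => i; rewrite /sperm permE.
rewrite (eq_sym S); case: (_ @: S == S) => //.
by apply: eq_bigr => i _; rewrite /sflip permE.
Qed.

Lemma conj_Mchar n m (w : {perm 'I_n * bool}) : (Mchar m w)^* = Mchar m w.
Proof.
rewrite rmorph_sum; apply: eq_bigr => S _; rewrite /Mrep.
case: ifP => _; rewrite ?rmorph0 // rmorph_prod.
by under eq_bigr do rewrite rmorphXn rmorphN1.
Qed.

Lemma sum_Mchar_cube n m :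
  \sum_(w in hyperoct n) Mchar m w * Mchar m w * Mchar m w =
  (2 ^ n * \sum_(s : {perm 'I_n}) #|('Fix_(even_triples 'I_n m | triple_act 'I_n)[s])%g|)%:R.
Proof.
rewrite hyperoctE big_imset /=; last by move=> p q _ _; apply: signed_perm_inj.
rewrite (eq_bigl (fun=> true)) => [|p]; last by rewrite inE.
pose cube (w : {perm 'I_n * bool}) := Mchar m w * Mchar m w * Mchar m w.
rewrite (eq_bigr (fun p => cube (signed_perm (p.1, p.2)))) => [|[] //].
rewrite -(pair_bigA _ (fun f s => cube (signed_perm (f, s)))) exchange_big.
rewrite natrM natr_sum mulr_sumr; apply: eq_bigr => s _.
under eq_bigr do rewrite /cube Mchar_signed_perm sum_cube.
rewrite exchange_big /=.
under eq_bigr do rewrite sum_sign_on_triple card_ord.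
rewrite -big_mkcondr sumr_const natrX [RHS]mulr_natr; congr (_ *+ _).
apply: eq_card => t; rewrite in_setI (sameP afix1P eqP) triple_fixE !inE unfold_in /=.
by do !case: (_ == _); case: even_cover.
Qed.

Lemma tensor_mult_Mchar n m :
  tensor_mult (hyperoct n) (Mchar m) (Mchar m) (Mchar m) =
  #|orbit (triple_act 'I_n) setT @: even_triples 'I_n m|%:R.
Proof.
rewrite /tensor_mult; under eq_bigr do rewrite conj_Mchar.
rewrite sum_Mchar_cube (eq_bigl (fun s => s \in [set: {perm 'I_n}])) => [|s]; last first.
  by rewrite inE.
rewrite Frobenius_Cauchy ?even_triples_acts // card_hyperoct cardsT card_Sn.
rewrite mulnA mulnAC (natrM _ (2 ^ n * n`!)) mulKf //.
by rewrite pnatr_eq0 -lt0n muln_gt0 expn_gt0 fact_gt0.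
Qed.

Theorem lemma5p5 (d : nat) : (0 < d)%N ->
  tensor_mult (hyperoct (4 * d)%N)
    (@Mchar (4 * d)%N (2 * d)%N) (@Mchar (4 * d)%N (2 * d)%N) (@Mchar (4 * d)%N (2 * d)%N) = 1.
Proof.
move=> _; rewrite tensor_mult_Mchar.
have [t0 even_t0] := even_triples_nonempty (card_ord (4 * d)).
by rewrite (card_orbits_transitive (even_triples_transitive even_t0)).
Qed.
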